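(* Assume $n^{2/3}$ is an integer. Consider Algorithm ProxSAGA (described in the context) with $b=n^{2/3}$ and $\eta=1/(5L)$, run for $T\ge1$ iterations. Then the output $x_a$ satisfies $$\mathbb E\big[\|\mathcal G_\eta(x_a)\|^2\big]\le \frac{50L\,(F(x^0)-F(x^* ))}{3T},$$ where $x^*$ is an optimal solution of $\min_x F(x)$.
   Context: Setting: Let $n,d\ge 1$ be integers and $[n]=\{1,\dots,n\}$. Let $f_1,\dots,f_n:\mathbb R^d\to\mathbb R$ be differentiable (possibly nonconvex) functions, each $L$-smooth for some $L>0$, i.e. $\|\nabla f_i(x)-\nabla f_i(y)\|\le L\|x-y\|$ for all $x,y\in\mathbb R^d$ and $i\in[n]$. Let $f=\frac1n\sum_{i=1}^n f_i$. Let $h:\mathbb R^d\to\mathbb R\cup\{+\infty\}$ be proper, lower semicontinuous and convex, with closed domain. Let $F=f+h$, and let $x^*$ be a global minimizer of $F$ on $\mathbb R^d$ (assumed to exist). For $\eta>0$, $\mathrm{prox}_{\eta h}(x):=\arg\min_{y\in\mathbb R^d}\big(h(y)+\frac1{2\eta}\|y-x\|^2\big)$, and the gradient mapping is $\mathcal G_\eta(x):=\frac1\eta\big[x-\mathrm{prox}_{\eta h}(x-\eta\nabla f(x))\big]$. Algorithm ProxSAGA$(x^0,T,b,\eta)$: Given $x^0\in\mathbb R^d$, positive integers $T,b$ and $\eta>0$, set $\alpha^0_i=x^0$ for all $i\in[n]$. For $t=0,1,\dots$ let $g^t=\frac1n\sum_{i=1}^n\nabla f_i(\alpha^t_i)$.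 For $t=0,\dots,T-1$: draw two multisets $I_t,J_t$, each consisting of $b$ indices drawn independently and uniformly at random from $[n]$ (with replacement; $I_t$, $J_t$ independent of each other and of all previous draws); set $v^t=\frac1b\sum_{i\in I_t}\big(\nabla f_i(x^t)-\nabla f_i(\alpha^t_i)\big)+g^t$ and $x^{t+1}=\mathrm{prox}_{\eta h}(x^t-\eta v^t)$; set $\alpha^{t+1}_j=x^t$ for $j\in J_t$ and $\alpha^{t+1}_j=\alpha^t_j$ for $j\notin J_t$. The output $x_a$ is chosen uniformly at random from $\{x^0,\dots,x^{T-1}\}$. Expectations are over all randomness of the algorithm. *)

From Stdlib Require Import Reals ClassicalEpsilon.
From mathcomp Require Import all_boot.
Set Implicit Arguments. Unset Strict Implicit. Unset Printing Implicit Defensive.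
Local Open Scope R_scope.

Definition vec (d : nat) := 'I_d -> R.
Definition vadd d (x y : vec d) : vec d := fun k => x k + y k.
Definition vsub d (x y : vec d) : vec d := fun k => x k - y k.
Definition vscale d (a : R) (x : vec d) : vec d := fun k => a * x k.
Definition inner d (x y : vec d) : R := \big[Rplus/0]_(k < d) (x k * y k).
Definition norm2 d (x : vec d) : R := inner x x.
Definition norm d (x : vec d) : R := sqrt (norm2 x).
Definition vsum d (m : nat) (F : 'I_m -> vec d) : vec d :=
  fun k => \big[Rplus/0]_(i < m) F i k.

Definition has_gradient d (f : vec d -> R) (g : vec d -> vec d) : Prop :=
  forall x eps, 0 < eps -> exists delta, 0 < delta /\
    forall y, norm (vsub y x) < delta ->
      Rabs (f y - f x - inner (g x) (vsub y x)) <= eps * norm (vsub y x).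

Definition L_smooth d (L : R) (g : vec d -> vec d) : Prop :=
  forall x y, norm (vsub (g x) (g y)) <= L * norm (vsub x y).

(* Extended reals R ∪ {+oo}: option R, with None = +oo *)
Definition ole (u v : option R) : Prop :=
  match u, v with
  | _, None => True
  | Some a, Some b => a <= b
  | None, Some _ => False
  end.
Definition oaddR (u : option R) (r : R) : option R := option_map (fun a => a + r) u.
Definition Rlt_o (a : R) (u : option R) : Prop :=
  match u with Some c => a < c | None => True end.

Definition proper_fn d (h : vec d -> option R) : Prop := exists x, h x <> None.
Definition convex_fn d (h : vec d -> option R) : Prop :=
  forall x y a b t, h x = Some a -> h y = Some b -> 0 <= t <= 1 ->
    exists c, h (vadd (vscale t x) (vscale (1 - t) y)) = Some c /\
              c <= t * a + (1 - t) * b.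
Definition lsc_fn d (h : vec d -> option R) : Prop :=
  forall x a, Rlt_o a (h x) ->
    exists delta, 0 < delta /\
      forall y, norm (vsub y x) < delta -> Rlt_o a (h y).
Definition closed_dom d (h : vec d -> option R) : Prop :=
  forall x, (forall eps, 0 < eps -> exists y, h y <> None /\ norm (vsub y x) < eps) ->
    h x <> None.

Definition is_prox d (eta : R) (h : vec d -> option R) (x p : vec d) : Prop :=
  forall y, ole (oaddR (h p) (norm2 (vsub p x) / (2 * eta)))
                (oaddR (h y) (norm2 (vsub y x) / (2 * eta))).
(* prox_{eta h}(x) := argmin (chosen by Hilbert epsilon; unique under the
   standing assumptions) *)
Definition prox d (eta : R) (h : vec d -> option R) (x : vec d) : vec d :=
  epsilon (inhabits x) (fun p => is_prox eta h x p).

Definition favg d (n : nat) (f : 'I_n -> vec d -> R) (x : vec d) : R :=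
  (1 / INR n) * \big[Rplus/0]_(i < n) f i x.
Definition gradavg d (n : nat) (gf : 'I_n -> vec d -> vec d) (x : vec d) : vec d :=
  vscale (1 / INR n) (vsum (fun i => gf i x)).

Definition grad_map d (eta : R) (gradf : vec d -> vec d) (h : vec d -> option R)
  (x : vec d) : vec d :=
  vscale (1 / eta) (vsub x (prox eta h (vsub x (vscale eta (gradf x))))).

Definition is_global_min d (f : vec d -> R) (h : vec d -> option R) (xs : vec d) : Prop :=
  forall y, ole (oaddR (h xs) (f xs)) (oaddR (h y) (f y)).

(* one iteration's randomness: the b-tuples I_t and J_t of indices in [n] *)
Definition draw (n b : nat) := ({ffun 'I_b -> 'I_n} * {ffun 'I_b -> 'I_n})%type.
(* state: (x^t, (alpha^t_i)_i) *)
Definition state d (n : nat) := (vec d * ('I_n -> vec d))%type.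

Definition saga_step d (n b : nat) (eta : R) (gf : 'I_n -> vec d -> vec d)
  (h : vec d -> option R) (s : state d n) (D : draw n b) : state d n :=
  let (x, al) := s in
  let (I, J) := D in
  let g := vscale (1 / INR n) (vsum (fun i => gf i (al i))) in
  let v := vadd (vscale (1 / INR b)
                  (vsum (fun j : 'I_b => vsub (gf (I j) x) (gf (I j) (al (I j)))))) g in
  (prox eta h (vsub x (vscale eta v)),
   fun i => if [exists j, J j == i] then x else al i).

Definition saga_x d (n b : nat) (eta : R) (gf : 'I_n -> vec d -> vec d)
  (h : vec d -> option R) (x0 : vec d) (T : nat) (w : {ffun 'I_T -> draw n b})
  (k : nat) : vec d :=
  fst (foldl (saga_step eta gf h) (x0, fun _ => x0)
             (take k [seq w i | i <- enum 'I_T])).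

Definition Expect (Omega : finType) (X : Omega -> R) : R :=
  (\big[Rplus/0]_(w : Omega) X w) / INR #|{: Omega}|.

(* Let
   Psi(x, alpha) = F(x) + c (1/n) sum_i |x - alpha_i|^2 with c = 2 L b / (b + 4 n).
   The descent lemma and the three-point property of the prox show that a proximal
   step along any direction v satisfies
     F(x') <= F(x) + eta/2 |v - grad f(x)|^2 - 2 L |x' - x|^2 - eta/2 |G_eta(x)|^2.
   For the SAGA estimator the expected error |v - grad f(x)|^2 is at most L^2/b times
   the table term, and a table entry survives a refresh with probability
   (1 - 1/n)^b <= n / (n + b); with b^3 = n^2 and eta = 1/(5L) these combine into
   E Psi_{t+1} <= E Psi_t - eta/2 E |G_eta(x^t)|^2.  Telescoping from Psi_0 = F(x^0)
   down to Psi_T >= F^* gives the bound, even with 10 in place of 50/3.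
   Expectations are averages over all draw sequences; that the draws of step t are
   independent of the past is the invariance of these averages under redrawing one
   coordinate.  The prox is shown to exist by proving that minimizing sequences of the
   strongly convex prox objective are Cauchy. *)

From HB Require Import structures.
From Stdlib Require Import Reals Lra Lia Psatz ClassicalEpsilon FunctionalExtensionality.
From mathcomp Require Import all_boot zify.
Set Implicit Arguments. Unset Strict Implicit. Unset Printing Implicit Defensive.
Local Open Scope R_scope.

(** * Finite sums of reals *)

HB.instance Definition _ := Monoid.isComLaw.Build R 0 Rplus
  (fun a b c => esym (Rplus_assoc a b c)) Rplus_comm Rplus_0_l.

Section RealSums.
Variable I : finType.
Implicit Types (P : pred I) (F G : I -> R).

Lemma rsumMl P c F : c * \big[Rplus/0]_(i | P i) F i = \big[Rplus/0]_(i | P i) (c * F i).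
Proof. by apply: (big_rec2 (fun x y => c * x = y)) => [|i x y _ <-]; ring. Qed.

Lemma rsumMr P c F : \big[Rplus/0]_(i | P i) F i * c = \big[Rplus/0]_(i | P i) (F i * c).
Proof. by apply: (big_rec2 (fun x y => x * c = y)) => [|i x y _ <-]; ring. Qed.

Lemma rsumN P F : \big[Rplus/0]_(i | P i) (- F i) = - \big[Rplus/0]_(i | P i) F i.
Proof. by apply: (big_rec2 (fun x y => x = - y)) => [|i x y _ ->]; ring. Qed.

Lemma rsumB P F G : \big[Rplus/0]_(i | P i) (F i - G i)
  = \big[Rplus/0]_(i | P i) F i - \big[Rplus/0]_(i | P i) G i.
Proof. by rewrite /Rminus big_split rsumN. Qed.

Lemma rsum_le P F G : (forall i, P i -> F i <= G i) ->
  \big[Rplus/0]_(i | P i) F i <= \big[Rplus/0]_(i | P i) G i.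
Proof.
move=> FG; apply: (big_rec2 (fun x y => x <= y)) => [|i x y Pi]; first lra.
by have := FG i Pi; lra.
Qed.

Lemma rsum_ge0 P F : (forall i, P i -> 0 <= F i) -> 0 <= \big[Rplus/0]_(i | P i) F i.
Proof.
move=> F0; apply: (big_rec (fun x => 0 <= x)) => [|i x Pi]; first lra.
by have := F0 i Pi; lra.
Qed.

Lemma rsum_const_pred P c : \big[Rplus/0]_(i | P i) c = INR #|[pred i | P i]| * c.
Proof.
have -> : \big[Rplus/0]_(i | P i) c = \big[Rplus/0]_(i in [pred i | P i]) c.
  by apply: eq_bigl => i; rewrite inE.
rewrite big_const; elim: #|_| => [|k IH]; first by rewrite /=; ring.
by rewrite iterS IH S_INR; ring.
Qed.

Lemma rsum_const c : \big[Rplus/0]_(i : I) c = INR #|I| * c.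
Proof. by rewrite rsum_const_pred; congr (INR _ * _); apply: eq_card. Qed.

Lemma rsum_if P A B : \big[Rplus/0]_(i : I) (if P i then A else B)
  = INR #|I| * A + INR #|[pred i | ~~ P i]| * (B - A).
Proof.
rewrite -rsum_const -rsum_const_pred (big_mkcond (fun i => ~~ P i)) -big_split.
by apply: eq_bigr => i _; case: (P i) => /=; ring.
Qed.

End RealSums.

Lemma rsum_telescope (T : nat) (g P : nat -> R) :
  (forall t, (t < T)%N -> g t <= P t - P t.+1) ->
  \big[Rplus/0]_(k < T) g k <= P 0%N - P T.
Proof.
elim: T => [|T IH] gP; first by rewrite big_ord0 /=; lra.
rewrite big_ord_recr /=.
have -> : \big[Rplus/0]_(i < T) g (widen_ord (leqnSn T) i) = \big[Rplus/0]_(k < T) g k by [].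
have := IH (fun t Ht => gP t (ltnW Ht)); have := gP T (ltnSn T); lra.
Qed.

Lemma sqr_le_nonneg a b : 0 <= b -> a * a <= b * b -> a <= b.
Proof. by move=> b0 ab; case: (Rle_lt_dec a b) => // ba; nra. Qed.

Lemma sqr_lt_nonneg a b : 0 <= b -> a * a < b * b -> a < b.
Proof. by move=> b0 ab; case: (Rlt_le_dec a b) => // ba; nra. Qed.

Lemma half_frac_lt1 t : 0 <= t -> t / (2 * (t + 1)) < 1.
Proof.
move=> t0; apply: (Rmult_lt_reg_r (2 * (t + 1))); first lra.
by rewrite /Rdiv Rmult_assoc Rinv_l; lra.
Qed.

Lemma le_of_forall_le_add_small a b c : 0 <= c ->
  (forall s, 0 < s <= 1 -> a <= b + s * c) -> a <= b.
Proof.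
move=> c0 abc; case: (Rle_lt_dec a b) => // ba.
set s := Rmin 1 ((a - b) / (2 * (c + 1))).
have s1 : s <= 1 := Rmin_l _ _.
have s0 : 0 < s by apply: Rmin_glb_lt; [lra | apply: Rdiv_lt_0_compat; lra].
have : s * (2 * (c + 1)) <= a - b.
  have := Rmult_le_compat_r (2 * (c + 1)) _ _ ltac:(lra) (Rmin_r 1 ((a - b) / (2 * (c + 1)))).
  by rewrite -/s /Rdiv Rmult_assoc Rinv_l; lra.
by have := abc s (conj s0 s1); nra.
Qed.

Ltac vec_ext := apply: functional_extensionality => ?; rewrite /vsub /vadd /vscale; field.

(** * Euclidean vectors *)

Section Vectors.
Variable d : nat.
Implicit Types (x y z w : vec d).

Lemma innerC x y : inner x y = inner y x.
Proof. by rewrite /inner; apply: eq_bigr => k _; ring. Qed.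

Lemma innerDl x y z : inner (vadd x y) z = inner x z + inner y z.
Proof. by rewrite /inner -big_split; apply: eq_bigr => k _ /=; rewrite /vadd; ring. Qed.

Lemma innerBl x y z : inner (vsub x y) z = inner x z - inner y z.
Proof.
by rewrite /inner /Rminus -rsumN -big_split; apply: eq_bigr => k _ /=; rewrite /vsub; ring.
Qed.

Lemma innerZl a x z : inner (vscale a x) z = a * inner x z.
Proof. by rewrite /inner rsumMl; apply: eq_bigr => k _ /=; rewrite /vscale; ring. Qed.

Lemma innerDr x y z : inner z (vadd x y) = inner z x + inner z y.
Proof. by rewrite innerC innerDl !(innerC z). Qed.

Lemma innerBr x y z : inner z (vsub x y) = inner z x - inner z y.
Proof. by rewrite innerC innerBl !(innerC z). Qed.

Lemma innerZr a x z : inner z (vscale a x) = a * inner z x.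
Proof. by rewrite innerC innerZl (innerC z). Qed.

Lemma inner0l w : inner (fun _ => 0) w = 0.
Proof. by rewrite /inner; apply: big1 => k _; ring. Qed.

Lemma inner_vsuml m (F : 'I_m -> vec d) w :
  inner (vsum F) w = \big[Rplus/0]_(i < m) inner (F i) w.
Proof.
rewrite /inner /vsum exchange_big /=.
by apply: eq_bigr => k _ /=; rewrite rsumMr.
Qed.

Lemma inner_vsumr m (F : 'I_m -> vec d) w :
  inner w (vsum F) = \big[Rplus/0]_(i < m) inner w (F i).
Proof. by rewrite innerC inner_vsuml; apply: eq_bigr => i _; exact: innerC. Qed.

Lemma norm2D x y : norm2 (vadd x y) = norm2 x + 2 * inner x y + norm2 y.
Proof. by rewrite /norm2 innerDl !innerDr (innerC y x); ring. Qed.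

Lemma norm2B x y : norm2 (vsub x y) = norm2 x - 2 * inner x y + norm2 y.
Proof. by rewrite /norm2 innerBl !innerBr (innerC y x); ring. Qed.

Lemma norm2Z a x : norm2 (vscale a x) = a * a * norm2 x.
Proof. by rewrite /norm2 innerZl innerZr; ring. Qed.

Lemma norm2_subC x y : norm2 (vsub x y) = norm2 (vsub y x).
Proof. by rewrite !norm2B innerC; ring. Qed.

Lemma norm2_ge0 x : 0 <= norm2 x.
Proof. by apply: rsum_ge0 => k _; nra. Qed.

Lemma norm_ge0 x : 0 <= norm x.
Proof. exact: sqrt_pos. Qed.

Lemma normK x : norm x * norm x = norm2 x.
Proof. by rewrite /norm sqrt_sqrt //; exact: norm2_ge0. Qed.

Lemma normZ a x : norm (vscale a x) = Rabs a * norm x.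
Proof.
rewrite /norm norm2Z sqrt_mult_alt; last nra.
by rewrite -/(Rsqr a) sqrt_Rsqr_abs.
Qed.

Lemma coord_sqr_le_norm2 x (k : 'I_d) : x k * x k <= norm2 x.
Proof.
rewrite /norm2 /inner (bigD1 k) //=.
rewrite -{1}(Rplus_0_r (x k * x k)); apply: Rplus_le_compat_l.
by apply: rsum_ge0 => j _; nra.
Qed.

Lemma norm2_le_coords x c : (forall k, x k * x k <= c) -> norm2 x <= INR d * c.
Proof.
move=> xc; have -> : INR d * c = \big[Rplus/0]_(k < d) c by rewrite rsum_const card_ord.
exact: rsum_le (fun k _ => xc k).
Qed.

Lemma inner_le_young x y a : 0 < a -> inner x y <= a / 2 * norm2 x + / (2 * a) * norm2 y.
Proof.
move=> a0; have := norm2_ge0 (vsub (vscale a x) y).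
rewrite norm2B norm2Z innerZl => H.
have -> : a / 2 * norm2 x + / (2 * a) * norm2 y
  = / (2 * a) * (a * a * norm2 x + norm2 y) by field; lra.
have -> : inner x y = / (2 * a) * (2 * a * inner x y) by field; lra.
by apply: Rmult_le_compat_l; [apply/Rlt_le/Rinv_0_lt_compat|]; lra.
Qed.

Lemma cauchy_schwarz x y : inner x y <= norm x * norm y.
Proof.
have nxy0 : 0 <= norm x * norm y by apply: Rmult_le_pos; exact: norm_ge0.
have [x0|x0] := Req_dec (norm2 x) 0.
  suff -> : inner x y = 0 by [].
  rewrite /inner; apply: big1 => k _.
  have := coord_sqr_le_norm2 x k; rewrite x0 => xk.
  have -> : x k = 0 by nra.
  ring.
apply: sqr_le_nonneg => //.
have -> : norm x * norm y * (norm x * norm y) = norm2 x * norm2 y by rewrite -!normK; ring.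
(* [|x|^2 y - <x,y> x] has squared norm [|x|^2 (|x|^2 |y|^2 - <x,y>^2)]. *)
have := norm2_ge0 (vsub (vscale (norm2 x) y) (vscale (inner x y) x)).
rewrite norm2B !norm2Z innerZl innerZr (innerC y x).
have : 0 < norm2 x by have := norm2_ge0 x; lra.
nra.
Qed.

Lemma normD_le x y : norm (vadd x y) <= norm x + norm y.
Proof.
apply: sqr_le_nonneg; first by have := norm_ge0 x; have := norm_ge0 y; lra.
rewrite normK norm2D -!normK.
by have := cauchy_schwarz x y; lra.
Qed.

Lemma norm2_midpoint w y z :
  norm2 (vsub (vadd (vscale (1/2) y) (vscale (1 - 1/2) z)) w)
  = (norm2 (vsub y w) + norm2 (vsub z w)) / 2 - norm2 (vsub y z) / 4.
Proof.
have -> : vsub (vadd (vscale (1/2) y) (vscale (1 - 1/2) z)) w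
   = vadd (vscale (1/2) (vsub y w)) (vscale (1/2) (vsub z w)) by vec_ext.
have -> : vsub y z = vsub (vsub y w) (vsub z w) by vec_ext.
by rewrite norm2D (norm2B (vsub y w)) !norm2Z innerZl innerZr; field.
Qed.

End Vectors.

Section VectorSums.
Variables (d m : nat).
Implicit Types (F G : 'I_m -> vec d).

Lemma vsumB F G : vsum (fun i => vsub (F i) (G i)) = vsub (vsum F) (vsum G).
Proof.
apply: functional_extensionality => k.
by rewrite /vsum /vsub /Rminus big_split rsumN.
Qed.

Lemma vsum_const (v : vec d) : vsum (fun _ : 'I_m => v) = vscale (INR m) v.
Proof. by apply: functional_extensionality => k; rewrite /vsum /vscale rsum_const card_ord. Qed.

End VectorSums.

(** * The descent lemma *)

Section Descent.
Variable d : nat.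
Implicit Types (x y u : vec d).

Lemma derivable_pt_lim_line (f : vec d -> R) g x u t : has_gradient f g ->
  derivable_pt_lim (fun s => f (vadd x (vscale s u))) t (inner (g (vadd x (vscale t u))) u).
Proof.
move=> fg eps eps0; set z := vadd x (vscale t u).
have nu0 := norm_ge0 u.
have eps'0 : 0 < eps / (2 * (norm u + 1)) by apply: Rdiv_lt_0_compat; lra.
have [del [del0 Hdel]] := fg z _ eps'0.
have del'0 : 0 < del / (norm u + 1) by apply: Rdiv_lt_0_compat; lra.
exists (mkposreal _ del'0) => r r0 /= rdel.
have zr : vsub (vadd x (vscale (t + r) u)) z = vscale r u by rewrite /z; vec_ext.
have r0' : 0 < Rabs r by exact: Rabs_pos_lt.
have near : norm (vsub (vadd x (vscale (t + r) u)) z) < del.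
  rewrite zr normZ.
  have : Rabs r * (norm u + 1) < del.
    apply: (Rlt_le_trans _ (del / (norm u + 1) * (norm u + 1))); first nra.
    by rewrite /Rdiv Rmult_assoc Rinv_l; lra.
  nra.
have := Hdel _ near; rewrite zr normZ innerZr.
set D := f _ - f z; set l := inner (g z) u => HD.
have -> : D / r - l = (D - r * l) / r by field.
rewrite /Rdiv Rabs_mult Rabs_inv.
apply: (Rmult_lt_reg_r (Rabs r)) => //.
rewrite Rmult_assoc Rinv_l ?Rmult_1_r; last lra.
apply: (Rle_lt_trans _ _ _ HD).
have : eps / (2 * (norm u + 1)) * norm u < eps.
  have -> : eps / (2 * (norm u + 1)) * norm u = eps * (norm u / (2 * (norm u + 1))).
    by field; lra.
  by have := half_frac_lt1 nu0; nra.
nra.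
Qed.

(* Mean value theorem for [s |-> f (x + s (y - x)) - s <g x, y - x> - s^2 L |y - x|^2 / 2]. *)
Lemma smooth_descent (f : vec d -> R) g L x y :
  has_gradient f g -> L_smooth L g -> 0 <= L ->
  f y <= f x + inner (g x) (vsub y x) + L / 2 * norm2 (vsub y x).
Proof.
move=> fg gL L0; set u := vsub y x; set A := inner (g x) u; set K := L / 2 * norm2 u.
pose psi s := f (vadd x (vscale s u)) - A * s - K * (s * s).
have psi' : forall t, derivable_pt_lim psi t
    (inner (g (vadd x (vscale t u))) u - A * 1 - K * (1 * t + t * 1)).
  move=> t; apply: derivable_pt_lim_minus;
    [apply: derivable_pt_lim_minus; [exact: derivable_pt_lim_line|]|].
    exact: derivable_pt_lim_scal (derivable_pt_lim_id t).
  exact: derivable_pt_lim_scal (derivable_pt_lim_mult _ _ _ _ _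
           (derivable_pt_lim_id t) (derivable_pt_lim_id t)).
pose pr t := exist (fun l => derivable_pt_abs psi t l) _ (psi' t).
have [c [mvt c01]] := MVT_cor1 psi 0 1 pr Rlt_0_1; rewrite /= in mvt.
have slope : inner (g (vadd x (vscale c u))) u - A * 1 - K * (1 * c + c * 1) <= 0.
  have xc : vsub (vadd x (vscale c u)) x = vscale c u by vec_ext.
  have := gL (vadd x (vscale c u)) x; rewrite xc normZ Rabs_right; last lra.
  have := cauchy_schwarz u (vsub (g (vadd x (vscale c u))) (g x)).
  rewrite innerBr !(innerC u) /A /K -normK.
  have := norm_ge0 u; have := norm_ge0 (vsub (g (vadd x (vscale c u))) (g x)).
  nra.
have psi0 : psi 0 = f x.
  by rewrite /psi (_ : vadd x (vscale 0 u) = x); [ring | vec_ext].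
have psi1 : psi 1 = f y - A - K.
  by rewrite /psi (_ : vadd x (vscale 1 u) = y); [ring | rewrite /u; vec_ext].
nra.
Qed.

End Descent.

(** * Existence of the proximal point *)

Definition inv_succ (k : nat) : R := / (INR k + 1).

Lemma inv_succ_gt0 k : 0 < inv_succ k.
Proof. by apply: Rinv_0_lt_compat; have := pos_INR k; lra. Qed.

Lemma inv_succ_small e : 0 < e -> exists N, forall k, (N <= k)%N -> inv_succ k < e.
Proof.
move=> e0; have [N [Ne N0]] := archimed_cor1 e e0.
exists N => k Nk; apply: Rle_lt_trans Ne; apply: Rinv_le_contravar.
  by apply: lt_0_INR; lia.
have : INR N <= INR k by apply/le_INR/leP.
lra.
Qed.

Lemma cv_inv_succ : Un_cv inv_succ 0.
Proof.
move=> e e0; have [N HN] := inv_succ_small e0.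
exists N => k /leP Nk; rewrite /R_dist Rminus_0_r Rabs_right.
  exact: HN.
exact/Rle_ge/Rlt_le/inv_succ_gt0.
Qed.

Lemma cv_const c : Un_cv (fun _ => c) c.
Proof. by move=> e e0; exists 0%nat => k _; rewrite /R_dist Rminus_diag Rabs_R0. Qed.

Lemma cauchy_rate_limit (u : nat -> R) B : 0 <= B ->
  (forall k l, (u k - u l) * (u k - u l) <= B * (inv_succ k + inv_succ l)) ->
  exists p, forall k, (u k - p) * (u k - p) <= B * inv_succ k.
Proof.
move=> B0 uB.
have cauchy : Cauchy_crit u.
  move=> e e0; set r := e * e / (2 * B + 1).
  have r0 : 0 < r by apply: Rdiv_lt_0_compat; nra.
  have Br : 2 * B * r < e * e.
    have -> : e * e = (2 * B + 1) * r by rewrite /r; field; lra.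
    nra.
  have [N HN] := inv_succ_small r0.
  exists N => k l /leP Nk /leP Nl; rewrite /R_dist.
  apply: sqr_lt_nonneg; first lra.
  rewrite -Rabs_mult Rabs_right; last exact/Rle_ge/Rle_0_sqr.
  have := uB k l; have := HN k Nk; have := HN l Nl; nra.
have [p up] := R_complete u cauchy.
exists p => k.
have := Rle_cv_lim (uB k)
  (CV_mult _ _ _ _ (CV_minus _ _ _ _ (cv_const (u k)) up) (CV_minus _ _ _ _ (cv_const (u k)) up))
  (CV_mult _ _ _ _ (cv_const B) (CV_plus _ _ _ _ (cv_const (inv_succ k)) cv_inv_succ)).
by rewrite Rplus_0_r.
Qed.

Lemma vec_cauchy_rate_limit d (ys : nat -> vec d) B : 0 <= B ->
  (forall k l, norm2 (vsub (ys k) (ys l)) <= B * (inv_succ k + inv_succ l)) ->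
  exists p, forall k, norm2 (vsub (ys k) p) <= INR d * (B * inv_succ k).
Proof.
move=> B0 ysB.
have [p Hp] := choice (fun (i : 'I_d) c => forall k, (ys k i - c) * (ys k i - c) <= B * inv_succ k)
  (fun i => cauchy_rate_limit B0
     (fun k l => Rle_trans _ _ _ (coord_sqr_le_norm2 (vsub (ys k) (ys l)) i) (ysB k l))).
by exists p => k; apply: norm2_le_coords => i; exact: Hp.
Qed.

Definition continuous_fn d (g : vec d -> R) : Prop :=
  forall x e, 0 < e -> exists del, 0 < del /\
    forall y, norm (vsub y x) < del -> Rabs (g y - g x) < e.

Lemma continuous_norm2_sub d (w : vec d) c : continuous_fn (fun y => norm2 (vsub y w) / c).
Proof.
move=> x e e0; set r := norm (vsub x w); set K := (Rabs (/ c) + 1) * (1 + 2 * r).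
have r0 : 0 <= r by exact: norm_ge0.
have K0 : 0 < K by rewrite /K; have := Rabs_pos (/ c); nra.
exists (Rmin 1 (e / K)); split; first by apply: Rmin_glb_lt; [lra | exact: Rdiv_lt_0_compat].
move=> y yx; set s := norm (vsub y x) in yx.
have s0 : 0 <= s by exact: norm_ge0.
have s1 := Rlt_le_trans _ _ _ yx (Rmin_l _ _).
have sK : s * K < e.
  have := Rlt_le_trans _ _ _ yx (Rmin_r _ _).
  by move/(Rmult_lt_compat_r K _ _ K0); rewrite /Rdiv Rmult_assoc Rinv_l; lra.
have -> : vsub y w = vadd (vsub y x) (vsub x w) by vec_ext.
rewrite norm2D /Rdiv -Rmult_minus_distr_r Rabs_mult -normK -/s -/r.
have ip := cauchy_schwarz (vscale (-1) (vsub y x)) (vsub x w).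
rewrite innerZl normZ Rabs_Ropp Rabs_R1 -/s -/r in ip.
have := cauchy_schwarz (vsub y x) (vsub x w); rewrite -/s -/r => ip'.
have : Rabs (s * s + 2 * inner (vsub y x) (vsub x w) + norm2 (vsub x w) - norm2 (vsub x w))
       <= s * (1 + 2 * r).
  by apply: Rabs_le; nra.
have := Rabs_pos (/ c); rewrite /K in sK; nra.
Qed.

Lemma Rlt_o_slack a u : Rlt_o a u -> exists g, 0 < g /\ Rlt_o (a + g) u.
Proof.
case: u => [c|] /= ac; last by exists 1; split; [lra|].
by exists ((c - a) / 2); split => /=; lra.
Qed.

Lemma lsc_oaddR d (h : vec d -> option R) (g : vec d -> R) :
  lsc_fn h -> continuous_fn g -> lsc_fn (fun y => oaddR (h y) (g y)).
Proof.
move=> hlsc gc x a ax.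
have [e [e0 axe]] : exists e, 0 < e /\ Rlt_o (a - g x + e) (h x).
  by apply: Rlt_o_slack; case: (h x) ax => [c|] //=; lra.
have [del1 [del10 H1]] := hlsc x _ axe.
have [del2 [del20 H2]] := gc x e e0.
exists (Rmin del1 del2); split; first exact: Rmin_glb_lt.
move=> y yx; move: (H1 y (Rlt_le_trans _ _ _ yx (Rmin_l _ _))).
move: (H2 y (Rlt_le_trans _ _ _ yx (Rmin_r _ _))) => /Rabs_def2 gy.
by case: (h y) => [c|] //=; lra.
Qed.

Section Prox.
Variables (d : nat) (eta : R) (h : vec d -> option R).
Hypothesis eta0 : 0 < eta.
Hypothesis hproper : proper_fn h.
Hypothesis hconvex : convex_fn h.
Hypothesis hlsc : lsc_fn h.

Local Notation q w y := (norm2 (vsub y w) / (2 * eta)).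

(* Lower semicontinuity bounds [h] below near a point [y0] of its domain;
   convexity propagates that bound along rays from [y0]. *)
Lemma convex_lsc_minorant : exists y0 c k, 0 <= k /\
  forall y a, h y = Some a -> c - k * norm (vsub y y0) <= a.
Proof.
have [y0] := hproper; case E0: (h y0) => [a0|] // _.
have [del [del0 Hdel]] := @hlsc y0 (a0 - 1) ltac:(rewrite E0 /=; lra).
exists y0, (a0 - 1), (2 / del); split; first by apply/Rlt_le/Rdiv_lt_0_compat; lra.
move=> y a E; set r := norm (vsub y y0).
have r0 : 0 <= 2 / del * r.
  by apply: Rmult_le_pos; [apply/Rlt_le/Rdiv_lt_0_compat; lra | exact: norm_ge0].
case: (Rlt_le_dec r del) => [near | far].
  by have := Hdel y near; rewrite E /=; lra.
set t := del / (2 * r).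
have tr : t * (2 * r) = del by rewrite /t; field; lra.
have t01 : 0 <= t <= 1 by split; [apply/Rlt_le/Rdiv_lt_0_compat|]; nra.
have [c [Ec ca]] := hconvex E E0 t01.
have : norm (vsub (vadd (vscale t y) (vscale (1 - t) y0)) y0) < del.
  rewrite (_ : vsub _ y0 = vscale t (vsub y y0)); last by vec_ext.
  by rewrite normZ Rabs_right -/r; nra.
move/Hdel; rewrite Ec /= => ac.
have : del * (a - a0) > - (2 * r) by nra.
have -> : 2 / del * r = 2 * r / del by field; lra.
move=> H; have : 2 * r / del >= - (a - a0).
  by apply/Rle_ge/(Rmult_le_reg_r del) => //; rewrite /Rdiv Rmult_assoc Rinv_l; lra.
lra.
Qed.

Lemma prox_obj_bounded_below w : exists M, forall y a, h y = Some a -> M <= a + q w y.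
Proof.
have [y0 [c [k [k0 minor]]]] := convex_lsc_minorant.
exists (c - k * norm (vsub w y0) - eta * k * k / 2) => y a E.
have := minor y a E.
have := normD_le (vsub y w) (vsub w y0).
rewrite (_ : vadd _ _ = vsub y y0); last by vec_ext.
rewrite -normK; set s := norm (vsub y w).
have : 0 <= (s - eta * k) * (s - eta * k) / (2 * eta).
  by apply: Rmult_le_pos; [exact: Rle_0_sqr | apply/Rlt_le/Rinv_0_lt_compat; lra].
have -> : (s - eta * k) * (s - eta * k) / (2 * eta) = s * s / (2 * eta) - k * s + eta * k * k / 2.
  by field; lra.
nra.
Qed.

Lemma prox_obj_inf w : exists m,
  (forall y a, h y = Some a -> m <= a + q w y) /\
  (forall e, 0 < e -> exists y a, h y = Some a /\ a + q w y < m + e).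
Proof.
have [M HM] := prox_obj_bounded_below w.
pose E r := exists y a, h y = Some a /\ r = - (a + q w y).
have Ebound : bound E by exists (- M) => r [y [a [Ha ->]]]; have := HM y a Ha; lra.
have Ene : exists r, E r.
  by have [y0] := hproper; case E0: (h y0) => [a0|] // _; exists (- (a0 + q w y0)), y0, a0.
have [s [sub sleast]] := completeness E Ebound Ene.
exists (- s); split.
  by move=> y a Ha; have := sub _ (ex_intro _ y (ex_intro _ a (conj Ha erefl))); lra.
move=> e e0; apply: NNPP => none.
have : s <= s - e; last lra.
apply: sleast => r [y [a [Ha ->]]].
case: (Rle_lt_dec (- (a + q w y)) (s - e)) => // lt.
by exfalso; apply: none; exists y, a; split => //; lra.
Qed.

(* Strong convexity, evaluated at the midpoint. *)
Lemma near_min_close w m y1 a1 e1 y2 a2 e2 :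
  (forall y a, h y = Some a -> m <= a + q w y) ->
  h y1 = Some a1 -> a1 + q w y1 < m + e1 ->
  h y2 = Some a2 -> a2 + q w y2 < m + e2 ->
  norm2 (vsub y1 y2) <= 4 * eta * (e1 + e2).
Proof.
move=> mlow E1 m1 E2 m2.
have half : 0 <= 1 / 2 <= 1 by lra.
have [c [Ec ca]] := hconvex E1 E2 half.
have := mlow _ _ Ec; rewrite norm2_midpoint.
have := norm2_ge0 (vsub y1 y2).
set N := norm2 (vsub y1 y2).
set n1 := norm2 (vsub y1 w) in m1 *; set n2 := norm2 (vsub y2 w) in m2 *.
move=> N0 mid.
have : N / (8 * eta) < (e1 + e2) / 2.
  have -> : N / (8 * eta)
    = (n1 / (2 * eta) + n2 / (2 * eta)) / 2 - ((n1 + n2) / 2 - N / 4) / (2 * eta).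
    by field; lra.
  lra.
move/(Rmult_lt_compat_r (8 * eta) _ _ ltac:(lra)).
have -> : N / (8 * eta) * (8 * eta) = N by field; lra.
lra.
Qed.

Lemma prox_exists w : exists p, is_prox eta h w p.
Proof.
have [m [mlow mclose]] := prox_obj_inf w.
have [ys Hys] := choice (fun k y => exists a, h y = Some a /\ a + q w y < m + inv_succ k)
  (fun k => mclose _ (inv_succ_gt0 k)).
have [p yp] : exists p, forall k, norm2 (vsub (ys k) p) <= INR d * (4 * eta * inv_succ k).
  apply: vec_cauchy_rate_limit => [|k l]; first lra.
  have [ak [Ek mk]] := Hys k; have [al [El ml]] := Hys l.
  exact: near_min_close mlow Ek mk El ml.
exists p.
suff pm : ole (oaddR (h p) (q w p)) (Some m).
  move=> y; move: pm; case: (h p) => [ap|] //= pm.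
  by case Ey: (h y) => [a|] //=; have := mlow y a Ey; lra.
apply: NNPP => not_pm.
have [g [g0 mg]] : exists g, 0 < g /\ Rlt_o (m + g) (oaddR (h p) (q w p)).
  by apply: Rlt_o_slack; case: (oaddR _ _) not_pm => //= v; lra.
have [del [del0 Hdel]] := lsc_oaddR hlsc (continuous_norm2_sub w (2 * eta)) mg.
set r := Rmin g (del * del / (INR d * (4 * eta) + 1)).
have Dd : 0 <= INR d * (4 * eta) by have := pos_INR d; nra.
have r0 : 0 < r by apply: Rmin_glb_lt => //; apply: Rdiv_lt_0_compat; nra.
have [N HN] := inv_succ_small r0; have eN := HN N (leqnn N).
have [a [Ea aN]] := Hys N.
suff : norm (vsub (ys N) p) < del.
  have rg : r <= g := Rmin_l _ _.
  by move/Hdel; rewrite Ea /=; lra.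
apply: sqr_lt_nonneg; first lra.
rewrite normK; apply: Rle_lt_trans (yp N) _.
have : inv_succ N * (INR d * (4 * eta) + 1) < del * del.
  have := Rlt_le_trans _ _ _ eN (Rmin_r _ _).
  by move/(Rmult_lt_compat_r _ _ _ (ltac:(lra) : 0 < INR d * (4 * eta) + 1));
    rewrite /Rdiv Rmult_assoc Rinv_l; lra.
have := inv_succ_gt0 N; nra.
Qed.

Lemma prox_spec w : is_prox eta h w (prox eta h w).
Proof. by apply: epsilon_spec; exact: prox_exists. Qed.

Lemma prox_in_dom w : h (prox eta h w) <> None.
Proof.
have [y0 Ey0] := hproper; move: (prox_spec w y0).
by case: (h (prox eta h w)) => //; case: (h y0) Ey0.
Qed.

(* First-order optimality of the prox, tested along the segment from [p] to [z]. *)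
Lemma prox_three_point w p z hp hz : is_prox eta h w p -> h p = Some hp -> h z = Some hz ->
  hp - hz <= inner (vsub p w) (vsub z p) / eta.
Proof.
move=> pmin Ep Ez.
apply: (@le_of_forall_le_add_small _ _ (norm2 (vsub z p) / (2 * eta))).
  by apply: Rmult_le_pos; [exact: norm2_ge0 | apply/Rlt_le/Rinv_0_lt_compat; lra].
move=> s s01; have s01' : 0 <= s <= 1 by lra.
have [c [Ec ca]] := hconvex Ez Ep s01'.
move: (pmin (vadd (vscale s z) (vscale (1 - s) p))); rewrite Ep Ec /=.
rewrite (_ : vsub (vadd (vscale s z) (vscale (1 - s) p)) w = vadd (vsub p w) (vscale s (vsub z p)));
  last by vec_ext.
rewrite norm2D innerZr norm2Z.
set A := inner (vsub p w) (vsub z p); set N := norm2 (vsub z p); set P := norm2 (vsub p w) => H.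
have : s * (hp - hz) <= s * (A / eta + s * (N / (2 * eta))).
  have -> : s * (A / eta + s * (N / (2 * eta))) = (2 * (s * A) + s * s * N) / (2 * eta).
    by field; lra.
  have : (P + 2 * (s * A) + s * s * N) / (2 * eta)
    = P / (2 * eta) + (2 * (s * A) + s * s * N) / (2 * eta) by field; lra.
  lra.
by move/(Rmult_le_reg_l s) => /(_ ltac:(lra)).
Qed.

End Prox.

(** * One proximal gradient step *)

(* The value of [h] on its domain; the junk value [0] elsewhere is never used. *)
Definition hval d (h : vec d -> option R) (x : vec d) : R :=
  if h x is Some a then a else 0.

Lemma hvalE d (h : vec d -> option R) x : h x <> None -> h x = Some (hval h x).
Proof. by rewrite /hval; case: (h x). Qed.

Lemma prox_step_identity d (x xp xb v g : vec d) eta : eta <> 0 ->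
  inner (vsub xp (vsub x (vscale eta v))) (vsub xb xp) / eta
  + inner (vsub xb (vsub x (vscale eta g))) (vsub x xb) / eta
  + inner g (vsub xp x) - inner (vsub g v) (vsub xp xb)
  + / eta / 2 * norm2 (vsub xp xb) + / eta / 2 * norm2 (vsub xp x)
  + eta / 2 * norm2 (vscale (1 / eta) (vsub x xb)) = 0.
Proof.
move=> eta0; rewrite /norm2 /inner /Rdiv !rsumMl !rsumMr /Rminus -rsumN -!big_split /=.
by apply: big1 => k _; rewrite /vsub /vscale /=; field.
Qed.

Section ProxGradStep.
Variables (n d : nat) (L eta : R).
Variables (f : 'I_n -> vec d -> R) (gf : 'I_n -> vec d -> vec d) (h : vec d -> option R).
Hypothesis n_gt0 : (0 < n)%N.
Hypothesis L0 : 0 <= L.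
Hypothesis eta0 : 0 < eta.
Hypothesis fgrad : forall i, has_gradient (f i) (gf i).
Hypothesis fsmooth : forall i, L_smooth L (gf i).
Hypothesis hproper : proper_fn h.
Hypothesis hconvex : convex_fn h.
Hypothesis hlsc : lsc_fn h.

Lemma favg_descent x y :
  favg f y <= favg f x + inner (gradavg gf x) (vsub y x) + L / 2 * norm2 (vsub y x).
Proof.
have n0 : 0 < INR n by apply/lt_0_INR/ltP.
rewrite /favg /gradavg innerZl inner_vsuml.
have : \big[Rplus/0]_(i < n) f i y <= \big[Rplus/0]_(i < n)
    (f i x + inner (gf i x) (vsub y x) + L / 2 * norm2 (vsub y x)).
  by apply: rsum_le => i _; exact: smooth_descent.
rewrite !big_split rsum_const card_ord /= => H.
have -> : 1 / INR n * \big[Rplus/0]_(i < n) f i x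
    + 1 / INR n * \big[Rplus/0]_(i < n) inner (gf i x) (vsub y x) + L / 2 * norm2 (vsub y x)
  = 1 / INR n * (\big[Rplus/0]_(i < n) f i x + \big[Rplus/0]_(i < n) inner (gf i x) (vsub y x)
                 + INR n * (L / 2 * norm2 (vsub y x))) by field; lra.
by apply: Rmult_le_compat_l => //; apply/Rlt_le/Rdiv_lt_0_compat; lra.
Qed.

Lemma prox_step_descent x v ax : h x = Some ax ->
  favg f (prox eta h (vsub x (vscale eta v))) + hval h (prox eta h (vsub x (vscale eta v)))
  <= favg f x + ax + eta / 2 * norm2 (vsub v (gradavg gf x))
     - (/ (2 * eta) - L / 2) * norm2 (vsub (prox eta h (vsub x (vscale eta v))) x)
     - eta / 2 * norm2 (grad_map eta (gradavg gf) h x).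
Proof.
move=> Ex; set g := gradavg gf x.
set xp := prox eta h (vsub x (vscale eta v)); set xb := prox eta h (vsub x (vscale eta g)).
have Exp := hvalE (prox_in_dom eta0 hproper hconvex hlsc (w := vsub x (vscale eta v))).
have Exb := hvalE (prox_in_dom eta0 hproper hconvex hlsc (w := vsub x (vscale eta g))).
have P1 := prox_three_point eta0 hconvex (prox_spec eta0 hproper hconvex hlsc _) Exp Exb.
have P2 := prox_three_point eta0 hconvex (prox_spec eta0 hproper hconvex hlsc _) Exb Ex.
have S := favg_descent x xp.
have Y := inner_le_young (vsub g v) (vsub xp xb) eta0.
have ID := prox_step_identity x xp xb v g (Rgt_not_eq _ _ eta0).
rewrite -/xp -/xb in P1 P2; rewrite -/g in S.
rewrite /grad_map -/g -/xb norm2_subC.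
have -> : / (2 * eta) = / eta / 2 by field; lra.
rewrite (_ : / (2 * eta) = / eta / 2) in Y; last by field; lra.
lra.
Qed.

End ProxGradStep.

(** * Averages over uniform draws *)

Definition fupd (A B : finType) (F : {ffun A -> B}) (a : A) (y : B) : {ffun A -> B} :=
  [ffun i => if i == a then y else F i].

Section FunctionUpdate.
Variables A B : finType.
Implicit Types (F : {ffun A -> B}) (a : A) (y : B).

Lemma fupd_eq F a y : fupd F a y a = y.
Proof. by rewrite ffunE eqxx. Qed.

Lemma fupd_neq F a y i : i != a -> fupd F a y i = F i.
Proof. by rewrite ffunE => /negbTE ->. Qed.

Lemma fupd_id F a y : fupd (fupd F a y) a (F a) = F.
Proof. by apply/ffunP => i; rewrite !ffunE; case: eqP => [->|]. Qed.

(* Redrawing coordinate [a] of a uniform random function keeps it uniform. *)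
Lemma rsum_ffun_resample a (Phi : {ffun A -> B} -> R) :
  INR #|B| * \big[Rplus/0]_F Phi F
  = \big[Rplus/0]_F \big[Rplus/0]_(y : B) Phi (fupd F a y).
Proof.
rewrite (pair_bigA _ (fun F y => Phi (fupd F a y))).
pose swap (p : {ffun A -> B} * B) := (fupd p.1 a p.2, p.1 a).
have swapK : cancel swap swap by case=> F y; rewrite /swap /= fupd_id fupd_eq.
have -> : \big[Rplus/0]_(p : {ffun A -> B} * B) Phi (fupd p.1 a p.2)
        = \big[Rplus/0]_(p : {ffun A -> B} * B) Phi p.1.
  by rewrite (reindex_inj (can_inj swapK)); apply: eq_bigr => p _; rewrite /swap /= fupd_id.
rewrite -(pair_bigA _ (fun F _ => Phi F)) rsumMl.
by apply: eq_bigr => F _; rewrite rsum_const.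
Qed.

End FunctionUpdate.

Lemma card_ffun_ord b n : #|{ffun 'I_b -> 'I_n}| = (n ^ b)%N.
Proof. by rewrite card_ffun !card_ord. Qed.

Section MinibatchVariance.
Variables (n b d : nat) (z : 'I_n -> vec d).
Hypothesis n_gt0 : (0 < n)%N.
Hypothesis z_centered : vsum z = (fun _ => 0).

Lemma rsum_inner_draws (j j' : 'I_b) : j != j' ->
  \big[Rplus/0]_(I : {ffun 'I_b -> 'I_n}) inner (z (I j)) (z (I j')) = 0.
Proof.
move=> jj'; apply: (Rmult_eq_reg_l (INR n)); last by apply/not_0_INR/eqP; rewrite -lt0n.
have := rsum_ffun_resample j (fun I : {ffun 'I_b -> 'I_n} => inner (z (I j)) (z (I j'))).
rewrite card_ord Rmult_0_r => ->.
apply: big1 => I _; rewrite (eq_bigr (fun y => inner (z y) (z (I j')))).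
  by rewrite -inner_vsuml z_centered inner0l.
by move=> y _; rewrite fupd_eq fupd_neq // eq_sym.
Qed.

Lemma rsum_norm2_draw (j : 'I_b) :
  INR n * \big[Rplus/0]_(I : {ffun 'I_b -> 'I_n}) norm2 (z (I j))
  = INR (n ^ b) * \big[Rplus/0]_(y < n) norm2 (z y).
Proof.
have := rsum_ffun_resample j (fun I : {ffun 'I_b -> 'I_n} => norm2 (z (I j))).
rewrite card_ord => ->; rewrite -card_ffun_ord -rsum_const.
by apply: eq_bigr => I _; apply: eq_bigr => y _; rewrite fupd_eq.
Qed.

(* Independent draws of a centered vector have orthogonal contributions. *)
Lemma rsum_norm2_minibatch :
  INR n * \big[Rplus/0]_(I : {ffun 'I_b -> 'I_n}) norm2 (vsum (fun j => z (I j)))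
  = INR b * INR (n ^ b) * \big[Rplus/0]_(y < n) norm2 (z y).
Proof.
rewrite /norm2 (eq_bigr (fun I : {ffun 'I_b -> 'I_n} =>
    \big[Rplus/0]_(j < b) \big[Rplus/0]_(j' < b) inner (z (I j)) (z (I j')))); last first.
  by move=> I _; rewrite inner_vsuml; apply: eq_bigr => j _; exact: inner_vsumr.
rewrite exchange_big rsumMl (eq_bigr (fun j : 'I_b =>
    INR (n ^ b) * \big[Rplus/0]_(y < n) norm2 (z y))).
  by rewrite rsum_const card_ord Rmult_assoc.
move=> j _; rewrite -(rsum_norm2_draw j); congr (_ * _).
rewrite exchange_big (bigD1 j) //= [X in _ + X]big1 ?Rplus_0_r //.
by move=> j' j'j; rewrite rsum_inner_draws // eq_sym.
Qed.

End MinibatchVariance.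

Lemma rsum_norm2_centered_le d n (a : 'I_n -> vec d) : (0 < n)%N ->
  \big[Rplus/0]_(y < n) norm2 (vsub (a y) (vscale (1 / INR n) (vsum a)))
  <= \big[Rplus/0]_(y < n) norm2 (a y).
Proof.
move=> n0; have n0' : 0 < INR n by apply/lt_0_INR/ltP.
set m := vscale (1 / INR n) (vsum a).
have am : vsum a = vscale (INR n) m by rewrite /m; vec_ext; lra.
rewrite (eq_bigr (fun y => norm2 (a y) + - (2 * inner (a y) m) + norm2 m)); last first.
  by move=> y _; rewrite norm2B; ring.
rewrite !big_split rsumN -rsumMl -inner_vsuml am innerZl rsum_const card_ord /=.
by have := norm2_ge0 m; rewrite /norm2; nra.
Qed.

(* [saga_dir] is the estimator v^t and [saga_table] the refreshed table alpha^{t+1}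
   of ProxSAGA, for the draws [I] and [J]. *)
Definition saga_dir d n b (gf : 'I_n -> vec d -> vec d) (x : vec d) (al : 'I_n -> vec d)
    (I : {ffun 'I_b -> 'I_n}) : vec d :=
  vadd (vscale (1 / INR b) (vsum (fun j : 'I_b => vsub (gf (I j) x) (gf (I j) (al (I j))))))
       (vscale (1 / INR n) (vsum (fun i => gf i (al i)))).

Definition saga_table d n b (x : vec d) (al : 'I_n -> vec d) (J : {ffun 'I_b -> 'I_n}) :
    'I_n -> vec d :=
  fun i => if [exists j, J j == i] then x else al i.

Definition table_dist d n (x : vec d) (al : 'I_n -> vec d) : R :=
  1 / INR n * \big[Rplus/0]_(i < n) norm2 (vsub x (al i)).

Lemma table_dist_ge0 d n (x : vec d) (al : 'I_n -> vec d) : (0 < n)%N -> 0 <= table_dist x al.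
Proof.
move=> n0; apply: Rmult_le_pos; first by apply/Rlt_le/Rdiv_lt_0_compat; [lra | apply/lt_0_INR/ltP].
by apply: rsum_ge0 => i _; exact: norm2_ge0.
Qed.

Lemma table_dist_const d n (x : vec d) : table_dist x (fun _ : 'I_n => x) = 0.
Proof.
rewrite /table_dist big1 ?Rmult_0_r // => i _.
by rewrite (_ : vsub x x = fun _ => 0) ?/norm2 ?inner0l //; vec_ext.
Qed.

Lemma saga_stepE d n b eta gf h (x : vec d) al (I J : {ffun 'I_b -> 'I_n}) :
  saga_step eta gf h (x, al) (I, J)
  = (prox eta h (vsub x (vscale eta (saga_dir gf x al I))), saga_table x al J).
Proof. by []. Qed.

Section EstimatorVariance.
Variables (n b d : nat) (L : R) (gf : 'I_n -> vec d -> vec d).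
Hypothesis n_gt0 : (0 < n)%N.
Hypothesis b_gt0 : (0 < b)%N.
Hypothesis fsmooth : forall i, L_smooth L (gf i).

Lemma saga_dir_variance x al :
  \big[Rplus/0]_(I : {ffun 'I_b -> 'I_n}) norm2 (vsub (saga_dir gf x al I) (gradavg gf x))
  <= INR (n ^ b) * (L * L / INR b) * table_dist x al.
Proof.
have n0 : 0 < INR n by apply/lt_0_INR/ltP.
have b0 : 0 < INR b by apply/lt_0_INR/ltP.
pose a i := vsub (gf i x) (gf i (al i)).
pose z i := vsub (a i) (vscale (1 / INR n) (vsum a)).
have z0 : vsum z = (fun _ => 0).
  by rewrite /z vsumB vsum_const; vec_ext; lra.
have dirE (I : {ffun 'I_b -> 'I_n}) :
    vsub (saga_dir gf x al I) (gradavg gf x) = vscale (1 / INR b) (vsum (fun j => z (I j))).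
  by rewrite /saga_dir /gradavg /z /a !vsumB vsum_const; vec_ext; lra.
under eq_bigr do rewrite dirE norm2Z.
rewrite -rsumMl.
have zL : \big[Rplus/0]_(y < n) norm2 (z y) <= L * L * \big[Rplus/0]_(i < n) norm2 (vsub x (al i)).
  apply: Rle_trans (rsum_norm2_centered_le a n_gt0) _.
  rewrite rsumMl; apply: rsum_le => i _; rewrite -!normK.
  have := fsmooth i x (al i); have := norm_ge0 (a i); have := norm_ge0 (vsub x (al i)).
  rewrite /a; nra.
have := rsum_norm2_minibatch b n_gt0 z0.
set SI := \big[Rplus/0]_I _; set NI := INR (n ^ b).
set Z := \big[Rplus/0]_(y < n) _ => SIE.
have -> : 1 / INR b * (1 / INR b) * SI = NI / (INR b * INR n) * Z.
  have -> : SI = INR b * NI * Z / INR n by rewrite -SIE; field; lra.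
  by field; lra.
have -> : NI * (L * L / INR b) * table_dist x al
  = NI / (INR b * INR n) * (L * L * \big[Rplus/0]_(i < n) norm2 (vsub x (al i))).
  by rewrite /table_dist; field; lra.
apply: Rmult_le_compat_l => //.
by apply: Rmult_le_pos; [exact: pos_INR | apply/Rlt_le/Rinv_0_lt_compat; nra].
Qed.

End EstimatorVariance.

Lemma card_ffun_avoiding n b (i : 'I_n) :
  #|[pred J : {ffun 'I_b -> 'I_n} | ~~ [exists j, J j == i]]| = ((n - 1) ^ b)%N.
Proof.
have -> : ((n - 1) ^ b)%N = #|ffun_on_mem 'I_b (mem (predC1 i))|.
  by rewrite card_ffun_on cardC1 !card_ord subn1.
apply: eq_card => J; rewrite !inE negb_exists.
by apply/forallP/ffun_onP => H j; have := H j; rewrite !inE.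
Qed.

(* Probability of avoiding a fixed index in [b] uniform draws from [n]:
   (1 - 1/n)^b <= n / (n + b). *)
Lemma expn_avoid_le n b : (0 < n)%N -> ((n - 1) ^ b * (n + b) <= n * n ^ b)%N.
Proof.
move=> n0; rewrite -expnS; elim: b => [|b IH]; first by rewrite expn0 expn1; lia.
rewrite !expnS in IH *.
have step : ((n - 1) * (n + b.+1) <= n * (n + b))%N by nia.
move: IH step; set X := ((n - 1) ^ b)%N; set Y := (n ^ b)%N => IH step.
have := leq_mul (leqnn X) step; have := leq_mul (leqnn n) IH; nia.
Qed.

Lemma rsum_table_dist_update n b d (y x : vec d) (al : 'I_n -> vec d) be :
  (0 < n)%N -> 0 < be ->
  \big[Rplus/0]_(J : {ffun 'I_b -> 'I_n}) table_dist y (saga_table x al J)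
  <= INR (n ^ b) * norm2 (vsub y x)
     + INR ((n - 1) ^ b)%N * (/ be * norm2 (vsub y x))
     + INR ((n - 1) ^ b)%N * (1 + be) * table_dist x al.
Proof.
move=> n_gt0 be0; have n0 : 0 < INR n by apply/lt_0_INR/ltP.
rewrite /table_dist -rsumMl exchange_big /=.
set A := norm2 (vsub y x); set Q := INR ((n - 1) ^ b)%N.
set NJ := INR (n ^ b).
have Q0 : 0 <= Q by exact: pos_INR.
have Hi (i : 'I_n) : \big[Rplus/0]_(J : {ffun 'I_b -> 'I_n}) norm2 (vsub y (saga_table x al J i))
    <= NJ * A + Q * (/ be * A) + Q * (1 + be) * norm2 (vsub x (al i)).
  rewrite (eq_bigr (fun J : {ffun 'I_b -> 'I_n} =>
    if [exists j, J j == i] then A else norm2 (vsub y (al i)))); last first.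
    by move=> J _; rewrite /saga_table; case: ifP.
  rewrite rsum_if card_ffun_avoiding card_ffun_ord -/Q -/NJ.
  rewrite (_ : vsub y (al i) = vadd (vsub y x) (vsub x (al i))); last by vec_ext.
  rewrite norm2D -/A.
  have := inner_le_young (vsub x (al i)) (vsub y x) be0; rewrite (innerC (vsub y x)) -/A.
  rewrite (_ : / (2 * be) = / be / 2); last by field; lra.
  have := norm2_ge0 (vsub x (al i)); have := norm2_ge0 (vsub y x).
  set C := norm2 (vsub x (al i)); set Ii := inner (vsub x (al i)) (vsub y x) => A0 C0 Y.
  have : A + 2 * Ii + C - A <= / be * A + be * C + C by lra.
  by move/(Rmult_le_compat_l Q _ _ Q0); nra.
apply: Rle_trans (Rmult_le_compat_l _ _ _ _ (rsum_le (P := xpredT) (fun i _ => Hi i))) _.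
  by apply/Rlt_le/Rdiv_lt_0_compat; lra.
rewrite !big_split /= !rsum_const card_ord -rsumMl.
by apply: Req_le; set S := \big[Rplus/0]_(i < n) _; field; lra.
Qed.

(** * Lyapunov decrease *)

(* With [c = 2 L B / (B + 4 N)] and Young weight [be = B / (4 N)] one has
   [c (1 + 1 / be) = 2 L]; the two lemmas below are the resulting bookkeeping,
   [Q / NJ] being the probability that an index is missed by all [B] draws. *)
Lemma saga_coef_distance_le N B NJ Q L : 1 <= B -> 1 <= N -> 0 < NJ -> 0 <= Q -> Q <= NJ ->
  0 < L -> 2 * L * B / (B + 4 * N) * (NJ + Q * / (B / (4 * N))) <= 2 * L * NJ.
Proof.
move=> B1 N1 NJ0 Q0 QNJ L0.
have -> : 2 * L * B / (B + 4 * N) * (NJ + Q * / (B / (4 * N)))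
  = 2 * L * (B * NJ + 4 * N * Q) / (B + 4 * N) by field; lra.
apply: (Rmult_le_reg_r (B + 4 * N)); first lra.
rewrite /Rdiv Rmult_assoc Rinv_l; last lra.
have : 0 <= (L * N) * (NJ - Q) by apply: Rmult_le_pos; nra.
nra.
Qed.

Lemma saga_coef_table_le N B NJ Q L : 1 <= B -> B <= N -> B * B * B = N * N -> 0 < NJ ->
  0 <= Q -> Q * (N + B) <= NJ * N -> 0 < L ->
  NJ * (1 / (5 * L) / 2) * (L * L / B) + 2 * L * B / (B + 4 * N) * Q * (1 + B / (4 * N))
  <= 2 * L * B / (B + 4 * N) * NJ.
Proof.
move=> B1 BN B3 NJ0 Q0 QN L0.
set P := 80 * N * B * B * NJ - 20 * B * B * Q * (4 * N + B) - (4 * N * B + 16 * N * N) * NJ.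
have P0 : 0 <= P.
  have PE : (N + B) * P = 20 * B * B * (4 * N + B) * (N * NJ - Q * (N + B))
      + N * NJ * (44 * N * N - 20 * N * B - 4 * B * B) + 60 * N * NJ * (B * B * B - N * N).
    by rewrite /P; ring.
  rewrite B3 Rminus_diag Rmult_0_r Rplus_0_r in PE.
  have : 0 <= 20 * B * B * (4 * N + B) * (N * NJ - Q * (N + B)).
    by apply: Rmult_le_pos; [|lra]; apply: Rmult_le_pos; [|lra]; nra.
  have : 0 <= N * NJ * (44 * N * N - 20 * N * B - 4 * B * B) by apply: Rmult_le_pos; nra.
  by case: (Rle_lt_dec 0 P) => // Pneg; nra.
have -> : 2 * L * B / (B + 4 * N) * NJ
  = NJ * (1 / (5 * L) / 2) * (L * L / B) + 2 * L * B / (B + 4 * N) * Q * (1 + B / (4 * N))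
    + L * P / (40 * N * B * (B + 4 * N)) by rewrite /P; field; lra.
have : 0 <= L * P / (40 * N * B * (B + 4 * N)).
  by apply: Rmult_le_pos; [nra | apply/Rlt_le/Rinv_0_lt_compat; nra].
lra.
Qed.

Definition saga_coef (n b : nat) (L : R) : R := 2 * L * INR b / (INR b + 4 * INR n).

Lemma saga_coef_ge0 n b L : (0 < n)%N -> 0 <= L -> 0 <= saga_coef n b L.
Proof.
move=> /ltP/lt_0_INR n0 L0; have b0 := pos_INR b.
by apply: Rle_mult_inv_pos; nra.
Qed.

Definition lyapunov d n (f : 'I_n -> vec d -> R) (h : vec d -> option R) (c : R)
    (s : state d n) : R :=
  favg f s.1 + hval h s.1 + c * table_dist s.1 s.2.
Arguments lyapunov : simpl never.

Lemma lyapunov_ge_min d n (f : 'I_n -> vec d -> R) h c xs s (st : state d n) :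
  (0 < n)%N -> 0 <= c -> is_global_min (favg f) h xs -> h xs = Some s ->
  h st.1 = Some (hval h st.1) -> favg f xs + s <= lyapunov f h c st.
Proof.
move=> n0 c0 xs_min xs_dom st_dom; have := xs_min st.1; rewrite xs_dom st_dom /= /lyapunov.
by have := table_dist_ge0 st.1 st.2 n0; nra.
Qed.

Section SagaLyapunov.
Variables (n d b : nat) (L : R).
Variables (f : 'I_n -> vec d -> R) (gf : 'I_n -> vec d -> vec d) (h : vec d -> option R).
Hypothesis n_gt0 : (0 < n)%N.
Hypothesis b_gt0 : (0 < b)%N.
Hypothesis b_le_n : (b <= n)%N.
Hypothesis b3_n2 : INR b * INR b * INR b = INR n * INR n.
Hypothesis L0 : 0 < L.
Hypothesis fgrad : forall i, has_gradient (f i) (gf i).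
Hypothesis fsmooth : forall i, L_smooth L (gf i).
Hypothesis hproper : proper_fn h.
Hypothesis hconvex : convex_fn h.
Hypothesis hlsc : lsc_fn h.

Local Notation eta := (1 / (5 * L)).
Local Notation c := (saga_coef n b L).
Local Notation be := (INR b / (4 * INR n)).
Local Notation Psi := (lyapunov f h c).
Local Notation NJ := (INR (n ^ b)).
Local Notation Q := (INR ((n - 1) ^ b)%N).

Let b1 : 1 <= INR b. Proof. exact/(le_INR 1)/leP. Qed.
Let bn : INR b <= INR n. Proof. exact/le_INR/leP. Qed.
Let eta0 : 0 < eta. Proof. by apply: Rdiv_lt_0_compat; lra. Qed.
Let c0 : 0 < c. Proof. by apply: Rdiv_lt_0_compat; nra. Qed.
Let NJ0 : 0 < NJ. Proof. by apply/lt_0_INR/ltP; rewrite expn_gt0 n_gt0. Qed.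
Let QNJ : Q * (INR n + INR b) <= NJ * INR n.
Proof.
rewrite -plus_INR -!mult_INR; apply/le_INR/leP.
by have := expn_avoid_le b n_gt0; rewrite -!multE -!plusE; lia.
Qed.

Lemma lyapunov_step_batch x al ax (I : {ffun 'I_b -> 'I_n}) : h x = Some ax ->
  \big[Rplus/0]_(J : {ffun 'I_b -> 'I_n}) Psi (saga_step eta gf h (x, al) (I, J))
  <= NJ * (favg f x + ax - eta / 2 * norm2 (grad_map eta (gradavg gf) h x))
     + NJ * (eta / 2) * norm2 (vsub (saga_dir gf x al I) (gradavg gf x))
     + c * Q * (1 + be) * table_dist x al.
Proof.
move=> Ex; set xp := prox eta h (vsub x (vscale eta (saga_dir gf x al I))).
have be0 : 0 < be by apply: Rdiv_lt_0_compat; lra.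
under eq_bigr do rewrite saga_stepE.
rewrite /lyapunov /= big_split /= rsum_const card_ffun_ord -rsumMl -/xp.
have table := rsum_table_dist_update b xp x al n_gt0 be0.
have step := prox_step_descent n_gt0 (Rlt_le _ _ L0) eta0 fgrad fsmooth hproper hconvex hlsc
  (saga_dir gf x al I) Ex; rewrite -/xp in step.
rewrite (_ : / (2 * eta) - L / 2 = 2 * L) in step; last by field; lra.
have QleNJ : Q <= NJ.
  by apply: (Rmult_le_reg_r (INR n)) => //; have := pos_INR ((n - 1) ^ b); nra.
have coef := saga_coef_distance_le b1 (Rle_trans _ _ _ b1 bn) NJ0 (pos_INR _) QleNJ L0.
have := norm2_ge0 (vsub xp x).
set A := norm2 (vsub xp x) in step table *; set S := \big[Rplus/0]_J _ in table *.
move=> A0; have : c * S <= c * (NJ * A + Q * (/ be * A) + Q * (1 + be) * table_dist x al).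
  by apply: Rmult_le_compat_l; lra.
have : c * (NJ + Q * / be) * A <= 2 * L * NJ * A by apply: Rmult_le_compat_r.
nra.
Qed.

Lemma lyapunov_step x al ax : h x = Some ax ->
  \big[Rplus/0]_(D : draw n b) Psi (saga_step eta gf h (x, al) D)
  <= INR #|{: draw n b}| * (Psi (x, al) - eta / 2 * norm2 (grad_map eta (gradavg gf) h x)).
Proof.
move=> Ex; rewrite (eq_bigr (fun D : draw n b => Psi (saga_step eta gf h (x, al) (D.1, D.2))));
  last by case.
rewrite -(pair_bigA _ (fun I J : {ffun 'I_b -> 'I_n} => Psi (saga_step eta gf h (x, al) (I, J)))).
apply: Rle_trans (rsum_le (P := xpredT) (fun I _ => lyapunov_step_batch al I Ex)) _.
rewrite !big_split /= !rsum_const -rsumMl card_prod mult_INR !card_ffun_ord /lyapunov /= /hval Ex.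
have := saga_dir_variance n_gt0 b_gt0 fsmooth x al.
have := saga_coef_table_le b1 bn b3_n2 NJ0 (pos_INR _) QNJ L0.
have := table_dist_ge0 x al n_gt0.
set G := norm2 _; set V := \big[Rplus/0]_I _; set S := table_dist x al.
move=> S0 coef var.
have : NJ * S * (NJ * (eta / 2) * (L * L / INR b) + c * Q * (1 + be)) <= NJ * S * (c * NJ).
  by apply: Rmult_le_compat_l => //; nra.
have : NJ * (eta / 2) * V <= NJ * (eta / 2) * (NJ * (L * L / INR b) * S).
  by apply: Rmult_le_compat_l => //; nra.
nra.
Qed.

End SagaLyapunov.

(** * Convergence rate *)

Section SagaTrajectory.
Variables (n d b T : nat) (eta : R).
Variables (gf : 'I_n -> vec d -> vec d) (h : vec d -> option R) (x0 : vec d).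

Definition saga_state (w : {ffun 'I_T -> draw n b}) (k : nat) : state d n :=
  foldl (saga_step eta gf h) (x0, fun _ => x0) (take k [seq w i | i <- enum 'I_T]).

Lemma saga_state0 w : saga_state w 0 = (x0, fun _ => x0).
Proof. by rewrite /saga_state take0. Qed.

Lemma saga_stateS w (t : 'I_T) : saga_state w t.+1 = saga_step eta gf h (saga_state w t) (w t).
Proof.
rewrite /saga_state (take_nth (w t)); last by rewrite size_map size_enum_ord.
by rewrite foldl_rcons (nth_map t) ?size_enum_ord // nth_ord_enum.
Qed.

Lemma saga_state_fupd w (t : 'I_T) D : saga_state (fupd w t D) t = saga_state w t.
Proof.
rewrite /saga_state -!(map_take _ _ (enum 'I_T)); congr foldl.
apply/eq_in_map => i /index_ltn.
by rewrite index_enum_ord => it; apply: fupd_neq; apply: contraTneq it => ->; rewrite ltnn.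
Qed.

Lemma saga_state_inv (P : state d n -> Prop) w k :
  P (x0, fun _ => x0) -> (forall s (D : draw n b), P s -> P (saga_step eta gf h s D)) ->
  P (saga_state w k).
Proof.
move=> P0 Pstep; rewrite /saga_state.
by elim: (take _ _) (x0, fun _ => x0) P0 => [|D l IH] s Ps //=; apply/IH/Pstep.
Qed.

End SagaTrajectory.

Section SagaRate.
Variables (n d b T : nat) (L : R).
Variables (f : 'I_n -> vec d -> R) (gf : 'I_n -> vec d -> vec d) (h : vec d -> option R).
Variables (x0 : vec d) (a : R).
Hypothesis n_gt0 : (0 < n)%N.
Hypothesis b_gt0 : (0 < b)%N.
Hypothesis b_le_n : (b <= n)%N.
Hypothesis b3_n2 : INR b * INR b * INR b = INR n * INR n.
Hypothesis L0 : 0 < L.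
Hypothesis fgrad : forall i, has_gradient (f i) (gf i).
Hypothesis fsmooth : forall i, L_smooth L (gf i).
Hypothesis hproper : proper_fn h.
Hypothesis hconvex : convex_fn h.
Hypothesis hlsc : lsc_fn h.
Hypothesis x0_dom : h x0 = Some a.

Local Notation eta := (1 / (5 * L)).
Local Notation Psi := (lyapunov f h (saga_coef n b L)).
Local Notation state_at := (@saga_state n d b T eta gf h x0).
Local Notation gap x := (norm2 (grad_map eta (gradavg gf) h x)).

Let eta0 : 0 < eta. Proof. by apply: Rdiv_lt_0_compat; lra. Qed.

Lemma saga_state_dom w k : h (state_at w k).1 = Some (hval h (state_at w k).1).
Proof.
apply: (saga_state_inv (P := fun s => h s.1 = Some (hval h s.1))) => [|[x al] [I J] _].
  by rewrite /hval x0_dom.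
exact/hvalE/(prox_in_dom eta0 hproper hconvex hlsc).
Qed.

Lemma expected_lyapunov_step (t : 'I_T) :
  \big[Rplus/0]_w Psi (state_at w t.+1)
  <= \big[Rplus/0]_w (Psi (state_at w t) - eta / 2 * gap (state_at w t).1).
Proof.
apply: (Rmult_le_reg_l (INR #|{: draw n b}|)).
  apply/lt_0_INR/ltP/card_gt0P.
  by have i0 : 'I_n := Ordinal n_gt0; exists ([ffun _ => i0], [ffun _ => i0]).
under eq_bigr do rewrite saga_stateS.
rewrite (rsum_ffun_resample t) rsumMl; apply: rsum_le => w _.
under eq_bigr do rewrite saga_state_fupd fupd_eq.
move: (saga_state_dom w t); case: (state_at w t) => x al xdom.
exact (lyapunov_step n_gt0 b_gt0 b_le_n b3_n2 L0 fgrad fsmooth hproper hconvex hlsc al xdom).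
Qed.

Lemma saga_sum_gap_le_lyapunov :
  \big[Rplus/0]_(k < T) \big[Rplus/0]_w gap (state_at w k).1
  <= 10 * L * (\big[Rplus/0]_w Psi (state_at w 0) - \big[Rplus/0]_w Psi (state_at w T)).
Proof.
rewrite (_ : 10 * L = / (eta / 2)); last by field; lra.
apply: (Rmult_le_reg_l (eta / 2)); first lra.
rewrite -Rmult_assoc Rinv_r ?Rmult_1_l; last lra.
rewrite rsumMl.
apply: (rsum_telescope (g := fun k => eta / 2 * \big[Rplus/0]_w gap (state_at w k).1)
                       (P := fun k => \big[Rplus/0]_w Psi (state_at w k))) => t tT.
have : \big[Rplus/0]_w Psi (state_at w t.+1)
    <= \big[Rplus/0]_w (Psi (state_at w t) - eta / 2 * gap (state_at w t).1).
  exact: expected_lyapunov_step (Ordinal tT).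
by rewrite rsumB -rsumMl; lra.
Qed.

Lemma saga_sum_gap_le_subopt xs s : is_global_min (favg f) h xs -> h xs = Some s ->
  \big[Rplus/0]_(k < T) \big[Rplus/0]_w gap (state_at w k).1
  <= 10 * L * (INR #|{ffun 'I_T -> draw n b}| * (favg f x0 + a - (favg f xs + s))).
Proof.
move=> xs_min xs_dom; apply: Rle_trans (saga_sum_gap_le_lyapunov) _.
apply: Rmult_le_compat_l; first lra.
rewrite Rmult_minus_distr_l -!rsum_const; apply: Rplus_le_compat.
  apply: Req_le; apply: eq_bigr => w _.
  by rewrite saga_state0 /lyapunov /= table_dist_const /hval x0_dom; ring.
apply/Ropp_le_contravar/rsum_le => w _.
apply: (lyapunov_ge_min n_gt0 _ xs_min xs_dom (saga_state_dom w T)).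
exact: saga_coef_ge0 n_gt0 (Rlt_le _ _ L0).
Qed.

End SagaRate.

Lemma Expect_prod_ord (W : finType) (T : nat) (X : W -> 'I_T -> R) :
  Expect (fun p : (W * 'I_T)%type => X p.1 p.2)
  = (\big[Rplus/0]_(k < T) \big[Rplus/0]_w X w k) / (INR #|W| * INR T).
Proof. by rewrite /Expect -(pair_bigA _ X) exchange_big card_prod mult_INR card_ord. Qed.

Theorem theorem4 (n d b T : nat) (L : R)
  (f : 'I_n -> vec d -> R) (gf : 'I_n -> vec d -> vec d)
  (h : vec d -> option R) (x0 xs : vec d) :
  (1 <= n)%N -> (1 <= d)%N -> 0 < L ->
  (forall i, has_gradient (f i) (gf i)) ->
  (forall i, L_smooth L (gf i)) ->
  proper_fn h -> convex_fn h -> lsc_fn h -> closed_dom h ->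
  is_global_min (favg f) h xs ->
  (b ^ 3 = n ^ 2)%N ->
  (1 <= T)%N ->
  forall a s, h x0 = Some a -> h xs = Some s ->
  Expect (fun w : ({ffun 'I_T -> draw n b} * 'I_T)%type =>
            norm2 (grad_map (1 / (5 * L)) (gradavg gf) h
                     (saga_x (1 / (5 * L)) gf h x0 w.1 w.2)))
  <= 50 * L * ((favg f x0 + a) - (favg f xs + s)) / (3 * INR T).
Proof.
move=> n_gt0 _ L0 fgrad fsmooth hproper hconvex hlsc _ xs_min b3 T_gt0 a s x0_dom xs_dom.
have b3N : (b * b * b = n * n)%N by move: b3; rewrite !expnS expn0 !muln1 mulnA.
have b_gt0 : (0 < b)%N by nia.
have b_le_n : (b <= n)%N by nia.
have b3R : INR b * INR b * INR b = INR n * INR n by rewrite -!mult_INR !multE b3N.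
have := saga_sum_gap_le_subopt T n_gt0 b_gt0 b_le_n b3R L0 fgrad fsmooth hproper hconvex hlsc x0_dom
  xs_min xs_dom.
rewrite (Expect_prod_ord (fun w k => norm2 (grad_map (1 / (5 * L)) (gradavg gf) h
  (saga_x (1 / (5 * L)) gf h x0 w k)))).
set S := \big[Rplus/0]_(k < T) _; set NW := INR #|_|; set D := _ - _ => SD.
have NW0 : 0 < NW.
  apply/lt_0_INR/ltP/card_gt0P; have i0 : 'I_n := Ordinal n_gt0.
  by exists [ffun _ => ([ffun _ => i0], [ffun _ => i0])].
have T1 : 1 <= INR T by exact/(le_INR 1)/leP.
have D0 : 0 <= D by have := xs_min x0; rewrite xs_dom x0_dom /= /D; lra.
have -> : 50 * L * D / (3 * INR T) = 50 / 3 * L * D * NW / (NW * INR T) by field; lra.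
apply: Rmult_le_compat_r; first by apply/Rlt_le/Rinv_0_lt_compat; nra.
have : 0 <= L * (NW * D) by apply: Rmult_le_pos; nra.
lra.
Qed.
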